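(* Let $S,T$ be nonempty subsets of $\{1,\dots,n-1\}$ and let $D$ be the digraph of the Boolean Toeplitz matrix $T_n\langle S;T\rangle$. If two vertices $u$ and $v$ are adjacent in the $m$-step competition graph $C^m(D)$ for some positive integer $m$, then $u-v$ is a multiple of $\gcd\{s+t: s\in S,t\in T\}$.
   Context: $T_n\langle S;T\rangle$ is the $n\times n$ $(0,1)$-matrix whose $(i,j)$-entry is $1$ iff $j-i\in S$ or $i-j\in T$; its digraph has vertex set $[n]$ and arc $(i,j)$ iff that entry is $1$. $C^m(D)$ is the graph on $[n]$ in which distinct $u,v$ are adjacent iff there is a vertex $w$ with directed $(u,w)$-walk and directed $(v,w)$-walk both of length $m$. *)

From mathcomp Require Import all_boot all_order all_algebra.
Set Implicit Arguments. Unset Strict Implicit. Unset Printing Implicit Defensive.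
Import GRing.Theory Num.Theory.

(* Vertices of T_n<S;T> are the n elements of 'I_n; vertex k : 'I_n stands for
   the paper's vertex k+1 in [n] (a shift that preserves all differences).
   S and T are subsets of {1,..,n-1}, modelled as sets of 'I_n avoiding 0. *)

Definition toeplitz_arc (n : nat) (S T : {set 'I_n}) (i j : 'I_n) : bool :=
  [exists s in S, (i + s == j :> nat)] || [exists t in T, (j + t == i :> nat)].

Fixpoint walk (n : nat) (S T : {set 'I_n}) (m : nat) (u w : 'I_n) : bool :=
  match m with
  | 0 => u == w
  | m'.+1 => [exists x, toeplitz_arc S T u x && walk S T m' x w]
  end.

Definition mstep_comp_adj (n : nat) (S T : {set 'I_n}) (m : nat) (u v : 'I_n) : bool :=
  (u != v) && [exists w, walk S T m u w && walk S T m v w].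

Definition gcd_sums (n : nat) (S T : {set 'I_n}) : nat :=
  \big[gcdn/0]_(s in S) \big[gcdn/0]_(t in T) (s + t)%N.

From mathcomp Require Import all_boot all_order all_algebra.
From mathcomp Require Import ring.
Set Implicit Arguments. Unset Strict Implicit. Unset Printing Implicit Defensive.
Import GRing.Theory.
Local Open Scope ring_scope.

(* Fix s0 in S and t0 in T, and let g be the gcd of the sums s + t.  Every arc
   i -> j satisfies j = i + s0 (mod g): a forward arc j = i + s differs from
   i + s0 by (s + t0) - (s0 + t0), a backward arc j = i - t by -(s0 + t).
   Hence every walk of length m from u ends at a vertex congruent to u + m s0,
   and two such walks ending at a common vertex force u = v (mod g). *)

Lemma gcd_sums_dvd (n : nat) (S T : {set 'I_n}) (s t : 'I_n) :
  s \in S -> t \in T -> (gcd_sums S T %| s + t)%N.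
Proof.
move=> sS tT; rewrite /gcd_sums (bigD1 s) //=.
by apply: dvdn_trans (dvdn_gcdl _ _) _; rewrite (bigD1 t) //= dvdn_gcdl.
Qed.

Section WalkCongruence.

Variables (n : nat) (S T : {set 'I_n}) (s0 t0 : 'I_n).
Hypotheses (s0S : s0 \in S) (t0T : t0 \in T).

Local Notation g := (Posz (gcd_sums S T)).

Lemma gcd_sums_dvdz (s t : 'I_n) :
  s \in S -> t \in T -> (g %| Posz s + Posz t)%Z.
Proof. by move=> sS tT; rewrite -PoszD dvdzE gcd_sums_dvd. Qed.

Lemma toeplitz_arc_dvd (i j : 'I_n) :
  toeplitz_arc S T i j -> (g %| Posz j - Posz i - Posz s0)%Z.
Proof.
case/orP=> [/existsP[s /andP[sS /eqP <-]] | /existsP[t /andP[tT /eqP <-]]].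
- have -> : Posz (i + s)%N - Posz i - Posz s0
            = (Posz s + Posz t0) - (Posz s0 + Posz t0) by rewrite PoszD; ring.
  by rewrite rpredB ?gcd_sums_dvdz.
- have -> : Posz j - Posz (j + t)%N - Posz s0 = - (Posz s0 + Posz t)
    by rewrite PoszD; ring.
  by rewrite rpredN gcd_sums_dvdz.
Qed.

Lemma walk_dvd (m : nat) (u w : 'I_n) :
  walk S T m u w -> (g %| Posz w - Posz u - Posz s0 *+ m)%Z.
Proof.
elim: m u => [|m IHm] u /=.
  by move=> /eqP ->; rewrite mulr0n subrr subr0 dvdz0.
case/existsP=> x /andP[ux xw].
have -> : Posz w - Posz u - Posz s0 *+ m.+1
          = (Posz w - Posz x - Posz s0 *+ m) + (Posz x - Posz u - Posz s0)
  by rewrite mulrS; ring.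
by rewrite rpredD ?IHm ?toeplitz_arc_dvd.
Qed.

End WalkCongruence.

Theorem theorem2p3 (n : nat) (S T : {set 'I_n})
  (hS0 : S != set0) (hT0 : T != set0)
  (hS : forall s, s \in S -> (0 < s)%N)
  (hT : forall t, t \in T -> (0 < t)%N)
  (u v : 'I_n) (m : nat) (hm : (0 < m)%N)
  (hadj : mstep_comp_adj S T m u v) :
  (Posz (gcd_sums S T) %| Posz (nat_of_ord u) - Posz (nat_of_ord v))%Z.
Proof.
case/set0Pn: hS0 => s0 s0S; case/set0Pn: hT0 => t0 t0T.
case/andP: hadj => _ /existsP[w /andP[uw vw]].
have -> : Posz u - Posz v
          = (Posz w - Posz v - Posz s0 *+ m) - (Posz w - Posz u - Posz s0 *+ m)
  by ring.
by rewrite rpredB ?(walk_dvd s0S t0T).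
Qed.
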